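(* The class of directed 1D aTAM systems is not intrinsically universal: there is no finite 1D tile set $U$ (and temperature $\tau'$) with computable $\mathcal{R},S$ such that every directed 1D aTAM system $\mathcal{T}$ is simulated, at some scale $m$ under $\mathcal{R}(\mathcal{T})$, by the 1D aTAM system $(U,S(\mathcal{T}),\tau')$ (whether or not that simulating system is required to be directed).
   Context: 1D aTAM: a tile type has a west glue and an east glue, each a pair (finite string label, nonnegative integer strength); a tile set is finite. Assemblies are partial functions $\alpha:\mathbb{Z}\dashrightarrow T$ with nonempty interval domain; adjacent tiles interact if the east glue of the left equals the west glue of the right with positive strength; $\alpha$ is $\tau$-stable if every cut between consecutive tiles has strength $\ge\tau$. A system $\mathcal{T}=(T,\sigma,\tau)$ has finite $\tau$-stable seed $\sigma$; growth is by single $\tau$-stable tile additions (finite or infinite sequences, result = limit); $\mathcal{A}[\mathcal{T}]$ are producible assemblies, $\mathcal{A}_\Box[\mathcal{T}]$ the producible ones admitting no further tile. $\mathcal{T}$ is directed if $|\mathcal{A}_\Box[\mathcal{T}]|=1$. Simulation: an $m$-block over $S$ is a partial function $\{0,\dots,m-1\}\dashrightarrow S$; $\alpha^m_x$ is $i\mapsto\alpha(mx+i)$. A partial $R$ from $m$-blocks to $T$ is valid if $\alpha\sqsubseteq\beta$, $\alpha\in\mathrm{dom}R$ imply $R(\beta)=R(\alpha)$; $R^*(\alpha')$ is $x\mapsto R(\alpha'^m_x)$. $\alpha'$ maps cleanly if each nonempty block at $x$ has $x$ or $x\pm1$ in $\mathrm{dom}\,R^*(\alpha')$ (or at most one nonempty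 block). $\mathcal{S}$ simulates $\mathcal{T}$ under $R$ if: (i) $R^*$ maps $\mathcal{A}[\mathcal{S}]$ onto $\mathcal{A}[\mathcal{T}]$ and $\mathcal{A}_\Box[\mathcal{S}]$ onto $\mathcal{A}_\Box[\mathcal{T}]$, all producible assemblies mapping cleanly; (ii) producible $\alpha'\to^\mathcal{S}\beta'$ implies $R^*(\alpha')\to^\mathcal{T}R^*(\beta')$; (iii) for every $\alpha\in\mathcal{A}[\mathcal{T}]$ there is $\Pi\subset\mathcal{A}[\mathcal{S}]$ with $R^*=\alpha$ on $\Pi$ such that for every producible $\beta$ with $\alpha\to^\mathcal{T}\beta$: each $\alpha'\in\Pi$ produces some $\beta'$ with $R^*(\beta')=\beta$, and whenever producible $\alpha''\to^\mathcal{S}\beta'$ with $R^*(\alpha'')=\alpha$, $R^*(\beta')=\beta$, some $\alpha'\in\Pi$ produces $\alpha''$. *)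

From HB Require Import structures.
From Stdlib Require Import String Ascii.
From mathcomp Require Import all_boot all_order all_algebra.
Set Implicit Arguments. Unset Strict Implicit. Unset Printing Implicit Defensive.
Import Order.TTheory GRing.Theory Num.Theory.

Definition str2seq (s : string) : seq nat :=
  map nat_of_ascii (list_ascii_of_string s).
Definition seq2str (l : seq nat) : string :=
  string_of_list_ascii (map ascii_of_nat l).
Lemma str2seqK : cancel str2seq seq2str.
Proof.
move=> s; rewrite /str2seq /seq2str -map_comp.
rewrite (@eq_map _ _ _ id); last by move=> a /=; rewrite ascii_nat_embedding.
by rewrite map_id string_of_list_ascii_of_string.
Qed.
HB.instance Definition _ := Countable.copy string (can_type str2seqK).

(* A glue is a pair (label, strength); a tile type is (west glue, east glue). *)
Definition glue := (string * nat)%type.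
Definition tile := (glue * glue)%type.
Definition west (t : tile) : glue := t.1.
Definition east (t : tile) : glue := t.2.

Definition asm := int -> option tile.

Definition in_dom (a : asm) (x : int) : bool := a x != None.

Local Open Scope ring_scope.

Definition is_asm (T : seq tile) (a : asm) : Prop :=
  (exists x, in_dom a x) /\
  (forall x y z : int, x <= y -> y <= z -> in_dom a x -> in_dom a z -> in_dom a y) /\
  (forall x t, a x = Some t -> t \in T).

Definition cut_strength (a : asm) (x : int) : nat :=
  match a x, a (x + 1) with
  | Some t, Some t' => if east t == west t' then (east t).2 else 0%N
  | _, _ => 0%N
  end.

Definition stable (tau : nat) (a : asm) : Prop :=
  forall x, in_dom a x -> in_dom a (x + 1) -> (tau <= cut_strength a x)%N.

Definition upd (a : asm) (x : int) (t : tile) : asm :=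
  fun y => if y == x then Some t else a y.

Definition step (T : seq tile) (tau : nat) (a b : asm) : Prop :=
  exists x t, t \in T /\ a x = None /\ b = upd a x t /\ is_asm T b /\ stable tau b.

(* a produces b: b is the result (limit) of a finite or infinite sequence of
   single tile additions starting at a (stuttering steps encode finite ones). *)
Definition produces (T : seq tile) (tau : nat) (a b : asm) : Prop :=
  exists f : nat -> asm, f 0%N = a /\
    (forall i, f i.+1 = f i \/ step T tau (f i) (f i.+1)) /\
    (forall x, exists i, forall j, (i <= j)%N -> f j x = b x).

(* Finite assemblies (used as seeds): offset and a (nonempty) word of tiles. *)
Definition finasm := (int * seq tile)%type.
Definition to_asm (s : finasm) : asm :=
  fun x => if s.1 <= x then nth None (map Some s.2) `|x - s.1|%N else None.

Definition sys := (seq tile * finasm * nat)%type.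
Definition tiles (s : sys) : seq tile := s.1.1.
Definition seed (s : sys) : finasm := s.1.2.
Definition temp (s : sys) : nat := s.2.

Definition valid_sys (s : sys) : Prop :=
  (0 < temp s)%N /\ (seed s).2 != [::] /\ all (mem (tiles s)) (seed s).2 /\
  stable (temp s) (to_asm (seed s)).

Definition producible (s : sys) (a : asm) : Prop :=
  produces (tiles s) (temp s) (to_asm (seed s)) a.
Definition sprod (s : sys) (a b : asm) : Prop := produces (tiles s) (temp s) a b.

Definition terminal (s : sys) (a : asm) : Prop :=
  producible s a /\ ~ (exists b, step (tiles s) (temp s) a b).

Definition directed (s : sys) : Prop :=
  exists a, forall b, terminal s b <-> b = a.

Definition mblock := seq (option tile).
Definition repfun := (nat * seq (mblock * tile))%type.
Definition scale (r : repfun) : nat := r.1.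

Definition Rfun (r : repfun) (b : mblock) : option tile :=
  if size b == r.1 then ohead [seq p.2 | p <- r.2 & p.1 == b] else None.

Definition blk (m : nat) (a : asm) (x : int) : mblock :=
  [seq a (m%:Z * x + i%:Z) | i <- iota 0 m].

Definition Rstar (r : repfun) (a : asm) : asm := fun x => Rfun r (blk r.1 a x).

Definition block_over (U : seq tile) (b : mblock) : bool :=
  all (fun o => if o is Some t then t \in U else true) b.

Definition blk_le (b b' : mblock) : Prop :=
  forall i, nth None b i != None -> nth None b' i = nth None b i.

Definition valid_repr (U : seq tile) (r : repfun) : Prop :=
  forall b b', size b = r.1 -> size b' = r.1 -> block_over U b -> block_over U b' ->
    blk_le b b' -> Rfun r b != None -> Rfun r b' = Rfun r b.

Definition nonempty_blk (m : nat) (a : asm) (x : int) : bool :=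
  has (fun o => o != None) (blk m a x).

Definition maps_cleanly (r : repfun) (a : asm) : Prop :=
  (forall x, nonempty_blk r.1 a x ->
     [\/ in_dom (Rstar r a) x, in_dom (Rstar r a) (x + 1) | in_dom (Rstar r a) (x - 1)])
  \/ (forall x y, nonempty_blk r.1 a x -> nonempty_blk r.1 a y -> x = y).

Definition simulates (sS sT : sys) (r : repfun) : Prop :=
  (0 < r.1)%N /\ valid_repr (tiles sS) r /\
  (forall a', producible sS a' -> producible sT (Rstar r a')) /\
  (forall a, producible sT a -> exists a', producible sS a' /\ Rstar r a' = a) /\
  (forall a', terminal sS a' -> terminal sT (Rstar r a')) /\
  (forall a, terminal sT a -> exists a', terminal sS a' /\ Rstar r a' = a) /\
  (forall a', producible sS a' -> maps_cleanly r a') /\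
  (forall a' b', producible sS a' -> sprod sS a' b' -> sprod sT (Rstar r a') (Rstar r b')) /\
  (forall a, producible sT a -> exists Pi : asm -> Prop,
     (forall a', Pi a' -> producible sS a' /\ Rstar r a' = a) /\
     (forall b, producible sT b -> sprod sT a b ->
        (forall a', Pi a' -> exists b', sprod sS a' b' /\ Rstar r b' = b) /\
        (forall a'' b', producible sS a'' -> sprod sS a'' b' ->
           Rstar r a'' = a -> Rstar r b' = b ->
           exists2 a', Pi a' & sprod sS a' a''))).

Inductive prf : Type :=
| PZero | PSucc | PProj of nat | PComp of prf & list prf
| PRec of prf & prf | PMu of prf.

Inductive peval : prf -> seq nat -> nat -> Prop :=
| ev_zero v : peval PZero v 0
| ev_succ n v : peval PSucc (n :: v) n.+1
| ev_proj i v : (i < size v)%N -> peval (PProj i) v (nth 0%N v i)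
| ev_comp f gs v ys y : pevals gs v ys -> peval f ys y -> peval (PComp f gs) v y
| ev_rec0 f g v y : peval f v y -> peval (PRec f g) (0%N :: v) y
| ev_recS f g n v r y : peval (PRec f g) (n :: v) r -> peval g (n :: r :: v) y ->
    peval (PRec f g) (n.+1 :: v) y
| ev_mu f v n : peval f (n :: v) 0 ->
    (forall k, (k < n)%N -> exists2 y, y != 0%N & peval f (k :: v) y) ->
    peval (PMu f) v n
with pevals : list prf -> seq nat -> seq nat -> Prop :=
| evs_nil v : pevals nil v [::]
| evs_cons g gs v y ys : peval g v y -> pevals gs v ys -> pevals (g :: gs) v (y :: ys).

Definition computable (A B : countType) (f : A -> B) : Prop :=
  exists e : prf, forall a, peval e [:: pickle a] (pickle (f a)).

From mathcomp Require Import all_boot all_order all_algebra zify.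
From Stdlib Require Import FunctionalExtensionality String.
Import Order.TTheory GRing.Theory Num.Theory.
Set Implicit Arguments. Unset Strict Implicit. Unset Printing Implicit Defensive.
Local Open Scope ring_scope.

(* Let [line_sys n] be the directed system that grows the line [0, n] from a
   one-tile seed at the origin, and take n = |U| + 2.  The simulator's seed
   represents the origin alone, so by clean mapping it lies left of 2m, m the
   scale; and some producible assembly reaches from the seed to block n.  Two
   of the |U| + 1 positions 2m, ..., 2m + |U| then carry the same tile.  As a
   1D cut only depends on the two tiles it separates, the segment between them
   can be copied over and over to the right, and the assemblies obtained stay
   producible.  Eventually they fill block n + 2, which is neither represented
   nor next to a represented block, although block 0 is nonempty too: this
   contradicts clean mapping. *)

Definition growth_seq (T : seq tile) (tau : nat) (f : nat -> asm) : Prop :=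
  forall i, f i.+1 = f i \/ step T tau (f i) (f i.+1).

Definition converges (f : nat -> asm) (b : asm) : Prop :=
  forall x, exists i, forall j, (i <= j)%N -> f j x = b x.

Definition wf_asm (T : seq tile) (tau : nat) (a : asm) : Prop := is_asm T a /\ stable tau a.

Section Growth.

Variables (T : seq tile) (tau : nat).

Lemma step_ext a b x : step T tau a b -> a x != None -> b x = a x.
Proof.
case=> y [t [_ [ay [-> _]]]] ax; rewrite /upd; case: eqP => // exy.
by move: ax; rewrite exy ay.
Qed.

Lemma step_wf a b : step T tau a b -> wf_asm T tau b.
Proof. by case=> x [t [_ [_ [_ wb]]]]. Qed.

Lemma growth_seq_ext f i j x :
  growth_seq T tau f -> (i <= j)%N -> f i x != None -> f j x = f i x.
Proof.
move=> hf + fx; elim: j => [|j IH]; first by rewrite leqn0 => /eqP->.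
rewrite leq_eqVlt => /orP[/eqP<-//|/IH fj].
by case: (hf j) => [->//|/step_ext ->] //; rewrite fj.
Qed.

Lemma growth_seq_ind f (I : asm -> Prop) : growth_seq T tau f -> I (f 0%N) ->
  (forall a b, I a -> step T tau a b -> I b) -> forall i, I (f i).
Proof. by move=> hf I0 IS; elim=> // i Ii; case: (hf i) => [->|/(IS _ _ Ii)]. Qed.

Lemma converges_ext f b i x :
  growth_seq T tau f -> converges f b -> f i x != None -> b x = f i x.
Proof.
move=> hf hb fx; have [i0 hi0] := hb x.
by rewrite -(hi0 (maxn i i0)) ?leq_maxr // (growth_seq_ext (i := i) hf) ?leq_maxl.
Qed.

Lemma converges_window f b L q : converges f b ->
  exists N, forall j, (N <= j)%N -> forall x, L <= x <= q -> f j x = b x.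
Proof.
move=> hb.
suff [N hN] : exists N, forall j, (N <= j)%N ->
    forall x, L <= x < L + (`|q - L|.+1)%:Z -> f j x = b x.
  by exists N => j /hN fj x hx; apply: fj; lia.
elim: `|q - L|.+1 => [|w [N IH]]; first by exists 0%N => j _ x; lia.
have [i hi] := hb (L + w%:Z).
exists (maxn N i) => j; rewrite geq_max => /andP[/IH fj /hi fbj] x hx.
by have [->//|xw] := eqVneq x (L + w%:Z); apply: fj; lia.
Qed.

Lemma produces_ext a b x : produces T tau a b -> a x != None -> b x = a x.
Proof. by case=> f [<- [hf hb]]; apply: converges_ext. Qed.

Lemma cut_strength_congr a b x y : a x = b y -> a (x + 1) = b (y + 1) ->
  cut_strength a x = cut_strength b y.
Proof. by rewrite /cut_strength => -> ->. Qed.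

Lemma produces_wf a b : wf_asm T tau a -> produces T tau a b -> wf_asm T tau b.
Proof.
move=> wa [f [f0 [hf hb]]].
have wf : forall i, wf_asm T tau (f i).
  by apply: growth_seq_ind hf _ _ => [|c d _ /step_wf]; rewrite ?f0.
have [[[x0 ax0] _] _] := wa.
split; [split; [|split]|].
- by exists x0; rewrite /in_dom (converges_ext (i := 0%N) hf hb) f0.
- move=> x y z xy yz bx bz; have [N /(_ N (leqnn N)) eN] := converges_window x z hb.
  have [[_ [fint _]] _] := wf N.
  rewrite /in_dom -eN ?xy //; apply: (fint x y z xy yz);
    by rewrite /in_dom eN ?lexx ?(le_trans xy yz).
- move=> x t bx; have [N /(_ N (leqnn N)) eN] := converges_window x x hb.
  have [[_ [_ ftiles]] _] := wf N.
  by apply: (ftiles x); rewrite eN ?lexx.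
- move=> x bx bx1; have [N /(_ N (leqnn N)) eN] := converges_window x (x + 1) hb.
  have [_ fst] := wf N.
  have ex : f N x = b x by apply: eN; lia.
  have ex1 : f N (x + 1) = b (x + 1) by apply: eN; lia.
  by rewrite -(cut_strength_congr ex ex1); apply: fst; rewrite /in_dom ?ex ?ex1.
Qed.

Definition reaches (a b : asm) : Prop :=
  exists f N, [/\ f 0%N = a, growth_seq T tau f & forall j, (N <= j)%N -> f j = b].

Lemma reaches_refl a : reaches a a.
Proof. by exists (fun=> a), 0%N; split=> // i; left. Qed.

Lemma reaches_step a b c : reaches a b -> step T tau b c -> reaches a c.
Proof.
case=> f [N [f0 hf fN]] bc.
exists (fun i => if (i <= N)%N then f i else c), N.+1; split=> //.
- move=> i /=; case: (ltngtP i N) => [iN|Ni|->].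
  + exact: hf.
  + by left.
  + by right; rewrite fN.
- by move=> j Nj; rewrite leqNgt Nj.
Qed.

Lemma reaches_produces a b : reaches a b -> produces T tau a b.
Proof.
by case=> f [N [f0 hf fN]]; exists f; do 2!split=> //; exists N => j /fN ->.
Qed.

Definition restrict (L q : int) (a : asm) : asm :=
  fun x => if L <= x <= q then a x else None.

Lemma step_restrict L q a b : step T tau a b ->
  restrict L q b = restrict L q a \/ step T tau (restrict L q a) (restrict L q b).
Proof.
case=> x [t [tT [ax [-> [[_ [bint btiles]] bst]]]]].
have updE : restrict L q (upd a x t) =
    if L <= x <= q then upd (restrict L q a) x t else restrict L q a.
  by case: ifP => hx; apply: functional_extensionality => y;
     rewrite /restrict /upd; case: eqP => // ->; rewrite hx.
rewrite updE; case: ifP => hx; [right | by left].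
have restrict_upd : upd (restrict L q a) x t = restrict L q (upd a x t) by rewrite updE hx.
exists x, t; do 2!split=> //; first by rewrite /restrict hx.
split=> //; rewrite restrict_upd; split; [split; [|split]|].
- by exists x; rewrite /in_dom /restrict hx /upd eqxx.
- move=> y1 y2 y3 h12 h23; rewrite /in_dom /restrict.
  case: ifP => // w1 d1; case: ifP => // w3 d3; rewrite ifT; last by lia.
  exact: (bint y1 y2 y3).
- by move=> y s; rewrite /restrict; case: ifP => // _; apply: btiles.
- move=> y; rewrite /in_dom /restrict; case: ifP => // w1 d1; case: ifP => // w2 d2.
  by rewrite /cut_strength /restrict w1 w2; apply: bst.
Qed.

Lemma reaches_restrict a b L q : produces T tau a b ->
  (forall x, a x != None -> L <= x <= q) -> reaches a (restrict L q b).
Proof.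
case=> f [f0 [hf hb]] adom; have [N hN] := converges_window L q hb.
exists (fun i => restrict L q (f i)), N; split.
- apply: functional_extensionality => x; rewrite /restrict f0.
  by case: ifP => // hx; case ax: (a x) => //; move: (adom x); rewrite ax hx => /(_ isT).
- by move=> i; case: (hf i) => [->|/(step_restrict L q)]; [left|].
- move=> j /hN fj; apply: functional_extensionality => x; rewrite /restrict.
  by case: ifP => // hx; apply: fj.
Qed.

End Growth.

Lemma to_asmE (s : finasm) x :
  to_asm s x = if s.1 <= x then onth s.2 `|x - s.1| else None.
Proof. by rewrite /to_asm onthE. Qed.

Lemma in_dom_to_asm (s : finasm) x :
  in_dom (to_asm s) x = (s.1 <= x) && (`|x - s.1| < size s.2)%N.
Proof. by rewrite /in_dom to_asmE; case: ifP => //= _; rewrite -onthTE; case: onth. Qed.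

Lemma to_asm_mem (s : finasm) x t : to_asm s x = Some t -> t \in s.2.
Proof. by rewrite to_asmE; case: ifP => // _ st; apply/onthP; exists `|x - s.1|%N. Qed.

Lemma in_dom_seed_start (s : sys) : valid_sys s -> in_dom (to_asm (seed s)) (seed s).1.
Proof. by case=> _ [seed_ne _]; rewrite in_dom_to_asm lexx subrr lt0n size_eq0. Qed.

Lemma seed_wf (s : sys) : valid_sys s -> wf_asm (tiles s) (temp s) (to_asm (seed s)).
Proof.
move=> s_valid; have [_ [_ [seed_tiles seed_st]]] := s_valid.
split=> //; split; [|split].
- by exists (seed s).1; apply: in_dom_seed_start.
- by move=> x y z xy yz; rewrite !in_dom_to_asm => /andP[? ?] /andP[? ?]; apply/andP; lia.
- by move=> x t /to_asm_mem st; apply: (allP seed_tiles).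
Qed.

Lemma producible_seed (s : sys) : producible s (to_asm (seed s)).
Proof. exact/reaches_produces/reaches_refl. Qed.

Lemma producible_wf (s : sys) a :
  valid_sys s -> producible s a -> wf_asm (tiles s) (temp s) a.
Proof. by move/seed_wf; apply: produces_wf. Qed.

Lemma stable_glue tau a x t u : (0 < tau)%N -> stable tau a ->
  a x = Some t -> a (x + 1) = Some u -> east t = west u.
Proof.
move=> tau_gt0 st ax ax1; have := st x; rewrite /in_dom /cut_strength ax ax1.
by case: (east t =P west u) => // _ /(_ isT isT); rewrite leqNgt tau_gt0.
Qed.

(* Glues are told apart by their strengths alone, so tile [k] can only be
   followed by tile [k + 1]. *)
Definition line_glue (k : nat) : glue := (""%string, k.+1).
Definition line_tile (k : nat) : tile := (line_glue k, line_glue k.+1).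
Definition line_sys (n : nat) : sys :=
  (map line_tile (iota 0 n.+1), (0, [:: line_tile 0]), 1%N).
Definition line_asm (k : nat) : asm :=
  fun x => if 0 <= x <= k%:Z then Some (line_tile `|x|) else None.

Lemma line_glue_match i j : (east (line_tile i) == west (line_tile j)) = (j == i.+1).
Proof. by apply/eqP/eqP => [[->]|->]. Qed.

Lemma mem_line_tile n k : (line_tile k \in tiles (line_sys n)) = (k <= n)%N.
Proof. by rewrite mem_map ?mem_iota ?add0n ?ltnS // => i j [->]. Qed.

Lemma line_tileP n t :
  t \in tiles (line_sys n) -> exists2 k, (k <= n)%N & t = line_tile k.
Proof. by case/mapP=> k; rewrite mem_iota add0n ltnS => kn ->; exists k. Qed.

Lemma line_valid n : valid_sys (line_sys n).
Proof.
do 3!split=> //=.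
by move=> x; rewrite !in_dom_to_asm /= => ? ?; lia.
Qed.

Lemma line_seed n : to_asm (seed (line_sys n)) = line_asm 0.
Proof.
apply: functional_extensionality => x; rewrite to_asmE /line_asm /= subr0.
by case: (ltrgtP 0 x) => [x_gt0|x_lt0|<-] //=; rewrite onth_default //=; lia.
Qed.

Lemma line_asm_wf n k : (k <= n)%N -> wf_asm (tiles (line_sys n)) 1 (line_asm k).
Proof.
move=> kn; split; [split; [|split]|].
- by exists 0; rewrite /in_dom /line_asm lexx.
- move=> x y z xy yz; rewrite /in_dom /line_asm.
  by case: ifP => // ? _; case: ifP => // ? _; rewrite ifT //; lia.
- by move=> x t; rewrite /line_asm; case: ifP => // ? [<-]; rewrite mem_line_tile; lia.
- move=> x; rewrite /in_dom /cut_strength /line_asm.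
  case: ifP => // ? _; case: ifP => // ? _.
  by rewrite line_glue_match (_ : absz (x + 1) = (absz x).+1) ?eqxx //; lia.
Qed.

Lemma line_asm_step n k : (k < n)%N ->
  step (tiles (line_sys n)) 1 (line_asm k) (line_asm k.+1).
Proof.
move=> kn; exists k.+1%:Z, (line_tile k.+1); split; first by rewrite mem_line_tile.
split; first by rewrite /line_asm ifF //; lia.
split; last exact: line_asm_wf.
apply: functional_extensionality => y; rewrite /upd /line_asm.
by case: eqP => [->|?]; [rewrite ifT //; lia | case: ifP; case: ifP => //; lia].
Qed.

Lemma line_asm_reaches n k : (k <= n)%N ->
  reaches (tiles (line_sys n)) 1 (line_asm 0) (line_asm k).
Proof.
elim: k => [_|k IH kn]; first exact: reaches_refl.
exact: reaches_step (IH (ltnW kn)) (line_asm_step kn).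
Qed.

Definition on_line (n : nat) (a : asm) : Prop :=
  a 0 != None /\ forall x, a x != None -> 0 <= x <= n%:Z /\ a x = Some (line_tile `|x|).

Lemma line_asm_on_line n k : (k <= n)%N -> on_line n (line_asm k).
Proof.
by move=> kn; split=> [|x]; rewrite /line_asm ?lexx //; case: ifP => // ? _; split=> //; lia.
Qed.

Lemma on_line_step n a b : on_line n a -> step (tiles (line_sys n)) 1 a b -> on_line n b.
Proof.
case=> a0 aline [x [t [/line_tileP[j jn ->] [ax [-> [[_ [bint _]] bst]]]]]].
set c := upd a x (line_tile j) in bint bst *.
have cx : c x = Some (line_tile j) by rewrite /c /upd eqxx.
have cE y : y != x -> c y = a y by move=> yx; rewrite /c /upd (negPf yx).
have x_neq0 : 0 != x by apply: contraNneq a0 => ->; rewrite ax.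
have c_line y : y != x -> c y != None -> c y = Some (line_tile `|y|) /\ 0 <= y.
  by move=> yx; rewrite cE // => /aline[/andP[? _] ->].
have [x_gt0|x_lt0] := ltrP 0 x.
- have xx1 : x - 1 != x by apply/eqP; lia.
  have cx1 : in_dom c (x - 1) by apply: (bint 0 _ x); rewrite /in_dom ?cx ?cE //; lia.
  have [ecx1 _] := c_line _ xx1 cx1.
  have := stable_glue (ltn0Sn 0) bst ecx1; rewrite subrK => /(_ _ cx) /eqP.
  rewrite line_glue_match => /eqP ej; split; first by rewrite cE.
  move=> y; case: (eqVneq y x) => [->|yx]; last by rewrite cE //; apply: aline.
  by rewrite cx ej; split; [lia | congr (Some (line_tile _)); lia].
- have xx1 : x + 1 != x by apply/eqP; lia.
  have cx1 : in_dom c (x + 1) by apply: (bint x _ 0); rewrite /in_dom ?cx ?cE //; lia.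
  have [ecx1 x1_ge0] := c_line _ xx1 cx1.
  have /eqP := stable_glue (ltn0Sn 0) bst cx ecx1.
  by rewrite line_glue_match => /eqP; lia.
Qed.

Lemma producible_on_line n a : producible (line_sys n) a -> on_line n a.
Proof.
move=> pa; have [f [f0 [hf hb]]] := pa.
have f_line : forall i, on_line n (f i).
  apply: growth_seq_ind hf _ (@on_line_step n).
  by rewrite f0 line_seed; apply: line_asm_on_line.
split.
  by rewrite (produces_ext pa) line_seed; case: (line_asm_on_line (leq0n n)).
move=> x; have [i /(_ i (leqnn i)) <-] := hb x; exact: (f_line i).2.
Qed.

Lemma on_line_eq_line_asm n a : on_line n a ->
  (forall x y z, x <= y -> y <= z -> in_dom a x -> in_dom a z -> in_dom a y) ->
  exists2 k, (k <= n)%N & a = line_asm k.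
Proof.
case=> a0 aline aint.
have exK : exists k : nat, in_dom a k%:Z by exists 0%N.
have boundK k : in_dom a k%:Z -> (k <= n)%N by move=> /aline[]; lia.
case: (ex_maxnP exK boundK) => K aK maxK.
exists K; first exact: boundK.
apply: functional_extensionality => x; rewrite /line_asm; case: ifP => xK.
  case ax: (a x) => [t|]; first by rewrite -ax; have /aline[] : a x != None by rewrite ax.
  by case/andP: xK => x0 xK; move: (aint 0 x K%:Z x0 xK a0 aK); rewrite /in_dom ax.
case ax: (a x) => [t|] //; have /aline[x_ge0 _] : a x != None by rewrite ax.
have := maxK `|x|%N; rewrite (_ : `|x|%N%:Z = x); last by lia.
by rewrite /in_dom ax => /(_ isT); lia.
Qed.

Lemma line_terminal n : terminal (line_sys n) (line_asm n).
Proof.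
split; first by rewrite /producible line_seed; apply/reaches_produces/line_asm_reaches.
case=> b nb; have [_ bline] := on_line_step (line_asm_on_line (leqnn n)) nb.
case: nb => x [t [_ [ax [bE _]]]].
have := bline x; rewrite bE /upd eqxx => /(_ isT) [xn _].
by move: ax; rewrite /line_asm xn.
Qed.

Lemma line_directed n : directed (line_sys n).
Proof.
exists (line_asm n) => b; split=> [[pb nstep]|->]; last exact: line_terminal.
have [[_ [bint _]] _] := producible_wf (line_valid n) pb.
have [k kn bk] := on_line_eq_line_asm (producible_on_line pb) bint.
case: (ltnP k n) => [k_lt_n|n_le_k]; last by rewrite bk (@anti_leq k n) ?kn.
by case: nstep; exists (line_asm k.+1); rewrite bk; apply: line_asm_step.
Qed.

Lemma size_blk m a x : size (blk m a x) = m.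
Proof. by rewrite size_map size_iota. Qed.

Lemma nth_blk m a x i : (i < m)%N -> nth None (blk m a x) i = a (m%:Z * x + i%:Z).
Proof. by move=> im; rewrite (nth_map 0%N) ?size_iota // nth_iota. Qed.

Lemma blk_over_tiles U m a x :
  (forall y t, a y = Some t -> t \in U) -> block_over U (blk m a x).
Proof. by move=> aU; apply/allP => _ /mapP[i _ ->]; case ay: (a _) => [t|] //; apply: aU ay. Qed.

Lemma blk_le_ext m a b x :
  (forall y, a y != None -> b y = a y) -> blk_le (blk m a x) (blk m b x).
Proof.
move=> ab i; case: (ltnP i m) => im; first by rewrite !nth_blk //; apply: ab.
by rewrite nth_default ?size_blk ?eqxx.
Qed.

Lemma nonempty_blkP m a x :
  reflect (exists2 i, (i < m)%N & a (m%:Z * x + i%:Z) != None) (nonempty_blk m a x).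
Proof.
apply: (iffP hasP) => [[o /mapP[i im ->]]|[i im ai]].
  by move: im; rewrite mem_iota add0n => im ai; exists i.
by exists (a (m%:Z * x + i%:Z)) => //; apply: map_f; rewrite mem_iota.
Qed.

Lemma nonempty_blk_div m a y : (0 < m)%N -> a y != None -> nonempty_blk m a (y %/ m%:Z)%Z.
Proof.
move=> m_gt0 ay; have m_pos : 0 < m%:Z by lia.
have := modz_ge0 y (lt0r_neq0 m_pos); have := ltz_pmod y m_pos; have := divz_eq y m%:Z.
move=> ey ltm gem; apply/nonempty_blkP; exists `|(y %% m%:Z)%Z|%N; first by lia.
by rewrite (_ : _ + _ = y) //; lia.
Qed.

Lemma nonempty_blk_ext m a b x : (forall y, a y != None -> b y = a y) ->
  nonempty_blk m a x -> nonempty_blk m b x.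
Proof. by move=> ab /nonempty_blkP[i im ai]; apply/nonempty_blkP; exists i; rewrite ?ab. Qed.

Lemma empty_blk m a x : ~~ nonempty_blk m a x -> blk m a x = nseq m None.
Proof.
move/hasPn => empty; rewrite -[in RHS](size_blk m a x).
by apply/all_pred1P/allP => o /empty; rewrite negbK.
Qed.

Lemma Rstar_ext U r a b x : valid_repr U r ->
  (forall y t, a y = Some t -> t \in U) -> (forall y t, b y = Some t -> t \in U) ->
  (forall y, a y != None -> b y = a y) -> in_dom (Rstar r a) x -> Rstar r b x = Rstar r a x.
Proof.
move=> vr aU bU ab ax; apply: vr; rewrite ?size_blk //; [exact: blk_over_tiles..|].
exact: blk_le_ext.
Qed.

Lemma maps_cleanly_bound r a k x0 x : maps_cleanly r a ->
  (forall y, in_dom (Rstar r a) y -> y <= k) -> nonempty_blk r.1 a x0 -> x0 <= k ->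
  nonempty_blk r.1 a x -> x <= k + 1.
Proof.
case=> [adjacent|single] bound ax0 x0k ax.
  by case: (adjacent x ax) => /bound; lia.
by rewrite (single x x0) //; lia.
Qed.

Lemma asm_pigeonhole U (a : asm) (s : int) : (forall x t, a x = Some t -> t \in U) ->
  (forall k : nat, (k <= size U)%N -> a (s + k%:Z) != None) ->
  exists p q : int, [/\ s <= p < q, q <= s + (size U)%:Z & a p = a q].
Proof.
move=> aU adom; set w := [seq a (s + k%:Z) | k <- iota 0 (size U).+1].
have w_sub : {subset w <= map Some U}.
  move=> o /mapP[k]; rewrite mem_iota add0n ltnS => /adom + ->.
  by case e: (a _) => [t|] // _; rewrite (mem_map (@Some_inj _)); apply: aU e.
have /(uniqPn None)[i [j [ij jw]]] : ~~ uniq w.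
  by apply/negP => /uniq_leq_size/(_ w_sub); rewrite !size_map size_iota ltnn.
move: jw; rewrite size_map size_iota ltnS => jU.
rewrite !(nth_map 0%N) ?size_iota ?nth_iota ?add0n; try lia.
by exists (s + i%:Z), (s + j%:Z); split=> //; lia.
Qed.

Lemma is_asm_interval T a (L q : int) : L <= q ->
  (forall x, in_dom a x = (L <= x <= q)) -> (forall x t, a x = Some t -> t \in T) -> is_asm T a.
Proof.
move=> Lq adom aT; split; [by exists L; rewrite adom lexx | split=> //].
by move=> x y z xy yz; rewrite !adom => /andP[Lx _] /andP[_ zq]; apply/andP; split;
  [apply: le_trans xy | apply: le_trans zq].
Qed.

Section Pumping.

Variables (T : seq tile) (tau : nat) (a : asm) (L : int).

Definition pump_inv (p q : int) (e : asm) : Prop :=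
  [/\ forall x, in_dom e x = (L <= x <= q), L <= p < q, e p = e q,
      wf_asm T tau e & reaches T tau a e].

(* The new cut between [q] and [q + 1] is a copy of the stable cut between
   [p] and [p + 1]. *)
Lemma pump_inv_step p q e : pump_inv p q e -> exists e', pump_inv (p + 1) (q + 1) e'.
Proof.
case=> edom /andP[Lp pq] epq [[_ [_ eT]] est] ae.
have [u ep1] : exists u, e (p + 1) = Some u.
  by move: (edom (p + 1)); rewrite /in_dom; case: (e _) => [u _|] /=; [exists u | lia].
have [q1_new q1_neq_p1 q_neq_q1] : [/\ e (q + 1) = None, p + 1 != q + 1 & q != q + 1].
  by split; [move: (edom (q + 1)); rewrite /in_dom; case: (e _) => //= ?; lia | |]; apply/eqP; lia.
set e' := upd e (q + 1) u.
have e'E x : x != q + 1 -> e' x = e x by move=> xq; rewrite /e' /upd (negPf xq).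
have e'q1 : e' (q + 1) = Some u by rewrite /e' /upd eqxx.
have e'dom x : in_dom e' x = (L <= x <= q + 1).
  case: (eqVneq x (q + 1)) => [->|xq]; rewrite /in_dom ?e'q1 ?e'E //=; first lia.
  by move: (edom x); rewrite /in_dom => ->; lia.
have e'T x t : e' x = Some t -> t \in T.
  case: (eqVneq x (q + 1)) => [->|xq]; last by rewrite e'E //; apply: eT.
  by rewrite e'q1 => -[<-]; apply: eT ep1.
have e'st : stable tau e'.
  move=> x; rewrite !e'dom => x_in x1_in; case: (ltrP x q) => xq.
    have -> : cut_strength e' x = cut_strength e x.
      by apply: cut_strength_congr; apply: e'E; apply/eqP; lia.
    by apply: est; rewrite edom; lia.
  have -> : x = q by lia.
  have -> : cut_strength e' q = cut_strength e p.
    by apply: cut_strength_congr; rewrite ?e'q1 ?e'E ?ep1 ?epq.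
  by apply: est; rewrite edom; lia.
have e'asm : is_asm T e' by apply: is_asm_interval e'dom e'T; lia.
exists e'; split=> //; first (apply/andP; split; lia).
- by rewrite e'E ?e'q1.
- apply: reaches_step ae _; exists (q + 1), u.
  by split; [apply: eT ep1 | split; [|split; [|split]]].
Qed.

Lemma pumping b p q : wf_asm T tau a -> produces T tau a b ->
  (forall x, a x != None -> L <= x <= q) -> (forall x, L <= x <= q -> b x != None) ->
  L <= p < q -> b p = b q ->
  forall k : nat, exists e, produces T tau a e /\ forall x, in_dom e x = (L <= x <= q + k%:Z).
Proof.
move=> wa ab adom bdom pq bpq.
have ae := reaches_restrict ab adom.
have inv0 : pump_inv p q (restrict L q b).
  split=> //; last exact: produces_wf wa (reaches_produces ae).
  - by move=> x; rewrite /in_dom /restrict; case: ifP => // /bdom.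
  - by rewrite /restrict !ifT //; lia.
move=> k; suff [e [edom _ _ _ ae']] : exists e, pump_inv (p + k%:Z) (q + k%:Z) e.
  by exists e; split; [apply: reaches_produces ae' | apply: edom].
elim: k => [|k [e inv]]; first by exists (restrict L q b); rewrite !addr0.
have [e' inv'] := pump_inv_step inv.
by exists e'; rewrite -addn1 PoszD !addrA.
Qed.

End Pumping.

Section LineSimulator.

Variables (sS : sys) (n : nat) (r : repfun).
Hypotheses (sS_valid : valid_sys sS) (sim : simulates sS (line_sys n) r).

Local Notation m := r.1.
Local Notation seed_asm := (to_asm (seed sS)).

Let m_gt0 : (0 < m)%N := sim.1.
Let repr_valid : valid_repr (tiles sS) r := sim.2.1.
Let image_producible :
  forall a', producible sS a' -> producible (line_sys n) (Rstar r a') := sim.2.2.1.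
Let preimage_producible : forall a, producible (line_sys n) a ->
  exists a', producible sS a' /\ Rstar r a' = a := sim.2.2.2.1.
Let preimage_terminal : forall a, terminal (line_sys n) a ->
  exists a', terminal sS a' /\ Rstar r a' = a := sim.2.2.2.2.2.1.
Let producible_clean : forall a', producible sS a' -> maps_cleanly r a' :=
  sim.2.2.2.2.2.2.1.

Lemma producible_tiles a' : producible sS a' -> forall y t, a' y = Some t -> t \in tiles sS.
Proof. by case/(producible_wf sS_valid) => -[_ []]. Qed.

Lemma image_on_line a' : producible sS a' -> on_line n (Rstar r a').
Proof. by move/image_producible/producible_on_line. Qed.

Lemma represented_nonempty a' x :
  producible sS a' -> in_dom (Rstar r a') x -> nonempty_blk m a' x.
Proof.
move=> pa; apply: contraTT => /empty_blk ablk.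
have none_blk : blk m (fun=> None) n.+1%:Z = nseq m None.
  by apply: empty_blk; apply/nonempty_blkP => -[].
(* By validity of [r], a represented empty block would make the block n + 1
   of the seed represented as well. *)
have empty_unrepresented : Rfun r (nseq m None) = None.
  apply/eqP; apply: contraT => none_repr.
  have none_dom : in_dom (Rstar r (fun=> None)) n.+1%:Z by rewrite /in_dom /Rstar none_blk.
  have [_ /(_ n.+1%:Z)] := image_on_line (producible_seed sS).
  rewrite (Rstar_ext repr_valid _ (producible_tiles (producible_seed sS)) _ none_dom) //.
  by move=> /(_ none_dom) [+ _]; lia.
by rewrite /in_dom /Rstar ablk empty_unrepresented.
Qed.

Lemma seed_image x : in_dom (Rstar r seed_asm) x -> x = 0.
Proof.
move=> sx; have line0 := producible_seed (line_sys n); rewrite line_seed in line0.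
have [a0 [pa0 a0E]] := preimage_producible line0.
have : in_dom (line_asm 0) x.
  rewrite -a0E /in_dom (Rstar_ext repr_valid _ (producible_tiles pa0) _ sx) //.
    exact: producible_tiles (producible_seed sS).
  by move=> y; apply: produces_ext pa0.
by rewrite /in_dom /line_asm; case: ifP => // ? _; lia.
Qed.

Lemma producible_block0 a' : producible sS a' -> nonempty_blk m a' 0.
Proof.
move=> pa; have pseed := producible_seed sS.
apply: nonempty_blk_ext (fun y => produces_ext pa) _.
exact: represented_nonempty pseed (image_on_line pseed).1.
Qed.

Lemma seed_dom y : seed_asm y != None -> (seed sS).1 <= y < 2 * m%:Z.
Proof.
move=> sy; apply/andP; split.
  by move: sy; rewrite -/(in_dom _ y) in_dom_to_asm => /andP[].
rewrite -ltz_divLR ?ltz_nat //.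
have := maps_cleanly_bound (producible_clean (producible_seed sS)) _
  (producible_block0 (producible_seed sS)) (lexx 0) (nonempty_blk_div m_gt0 sy).
by rewrite add0r; apply=> [z /seed_image ->]; lia.
Qed.

Lemma producible_block_bound a' x :
  producible sS a' -> nonempty_blk m a' x -> x <= n%:Z + 1.
Proof.
move=> pa; apply: maps_cleanly_bound (producible_clean pa) _ (producible_block0 pa) _.
  by move=> y /(image_on_line pa).2 [/andP[_ ->]].
by [].
Qed.

Lemma producible_far : exists b, producible sS b /\
  forall y, (seed sS).1 <= y <= m%:Z * n%:Z -> b y != None.
Proof.
have [b [[pb _] bE]] := preimage_terminal (line_terminal n).
exists b; split=> // y /andP[Ly yn].
have : in_dom (Rstar r b) n%:Z by rewrite bE /in_dom /line_asm lexx andbT.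
move/(represented_nonempty pb)/nonempty_blkP => [i im bi].
have [[_ [bint _]] _] := producible_wf sS_valid pb.
apply: (bint _ y _ Ly _ _ bi); first lia.
by rewrite /in_dom (produces_ext pb); apply: in_dom_seed_start.
Qed.

Lemma long_line_not_simulated : (size (tiles sS) + 2 <= n)%N -> False.
Proof.
move=> long.
have [_ L_lt] := andP (seed_dom (in_dom_seed_start sS_valid)).
have mn : 2 * m%:Z + (size (tiles sS))%:Z <= m%:Z * n%:Z by nia.
have [b [pb bdom]] := producible_far.
have b_window k : (k <= size (tiles sS))%N -> b (2 * m%:Z + k%:Z) != None.
  by move=> kU; apply: bdom; lia.
have [p [q [/andP[mp pq] qU bpq]]] := asm_pigeonhole (producible_tiles pb) b_window.
have seed_win (y : int) : seed_asm y != None -> (seed sS).1 <= y <= q.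
  by move/seed_dom; lia.
have b_win (y : int) : (seed sS).1 <= y <= q -> b y != None.
  by case/andP=> Ly yq; apply: bdom; rewrite Ly (le_trans yq (le_trans qU mn)).
have Lpq : (seed sS).1 <= p < q by apply/andP; split; lia.
have [e [pe edom]] := pumping (seed_wf sS_valid) pb seed_win b_win Lpq bpq (m * n.+2).
have far : nonempty_blk m e n.+2%:Z.
  apply/nonempty_blkP; exists 0%N => //; rewrite addr0 -/(in_dom e _) edom; nia.
by have := producible_block_bound pe far; lia.
Qed.

End LineSimulator.

Theorem mainTheorem7 :
  ~ exists (U : seq tile) (tau' : nat) (R : sys -> repfun) (S : sys -> finasm),
      computable R /\ computable S /\
      forall T : sys, valid_sys T -> directed T ->
        valid_sys (U, S T, tau') /\ simulates (U, S T, tau') T (R T).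
Proof.
case=> U [tau' [R [S [_ [_ simulator]]]]].
have [sS_valid sim] := simulator _ (line_valid (size U + 2)) (line_directed _).
exact: long_line_not_simulated sS_valid sim (leqnn _).
Qed.
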